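(* Let $n\ge 3$, let $H_0$ be the cyclic subgroup of $\operatorname{Sym}_n$ generated by $(1,2,\dots,n)$, and let $H$ be a subgroup of $\operatorname{Sym}_n$ with $H_0\subseteq H$. Then $G_n(H)\cong F\times\mathbb{Z}$, where the factor $\mathbb{Z}$ is generated by the (central) image of $z=a_1a_2\cdots a_n$, and $F$ is the group with generators $a_2,\dots,a_n$ and defining relations $$a_2a_3\cdots a_n=a_{\tau(k+1)}\cdots a_{\tau(n)}\,a_{\tau(1)}\cdots a_{\tau(k-1)}$$ for all $\tau\in H$, where $k=\tau^{-1}(1)$.
   Context: For $n\ge 3$ and a subset $H\subseteq\operatorname{Sym}_n$, $G_n(H)$ denotes the group with generators $a_1,\dots,a_n$ and defining relations $a_1a_2\cdots a_n=a_{\sigma(1)}a_{\sigma(2)}\cdots a_{\sigma(n)}$ for all $\sigma\in H$. *)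

From HB Require Import structures.
From mathcomp Require Import all_boot all_order all_algebra all_fingroup.
Set Implicit Arguments. Unset Strict Implicit. Unset Printing Implicit Defensive.

(* Words in the free group on X: a letter (x, true) stands for x,
   (x, false) for x^-1. *)
Definition word (X : Type) := seq (X * bool).

Definition pos (X : Type) (s : seq X) : word X := [seq (x, true) | x <- s].

Definition wmap (X Y : Type) (f : X -> Y) (w : word X) : word Y :=
  [seq (f p.1, p.2) | p <- w].

(* Equality in the group < X | l = r for R l r >: the congruence on words
   generated by free cancellation and the defining relations. *)
Inductive peq (X : Type) (R : word X -> word X -> Prop) : word X -> word X -> Prop :=
| peq_refl w : peq R w w
| peq_sym w1 w2 : peq R w1 w2 -> peq R w2 w1
| peq_trans w1 w2 w3 : peq R w1 w2 -> peq R w2 w3 -> peq R w1 w3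
| peq_cancel (u v : word X) x b : peq R (u ++ (x, b) :: (x, ~~ b) :: v) (u ++ v)
| peq_rel (u v l r : word X) : R l r -> peq R (u ++ l ++ v) (u ++ r ++ v).

(* The n-cycle (1,2,...,n), 0-indexed: i |-> i+1 mod n. *)
Definition cycle_perm (n : nat) : {perm 'I_n} := perm (@ordS_inj n).

(* Relations of G_n(H): a_1 ... a_n = a_{s(1)} ... a_{s(n)} for s in H
   (generators a_1..a_n are indexed by 'I_n, a_i <-> i-1). *)
Definition relG (n : nat) (H : {set {perm 'I_n}}) (l r : word 'I_n) : Prop :=
  exists2 s, s \in H & l = pos (enum 'I_n) /\ r = pos [seq s i | i <- enum 'I_n].

Definition zword (n : nat) : word 'I_n := pos (enum 'I_n).

Definition gensF (n : nat) := {i : 'I_n | 0 < val i}.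

(* Relations of F: a_2 ... a_n = a_{t(k+1)}...a_{t(n)} a_{t(1)}...a_{t(k-1)}
   for t in H, where k = t^{-1}(1), i.e. t k = 1 (0-indexed: t k = 0). *)
Definition relF (n : nat) (H : {set {perm 'I_n}}) (l r : word (gensF n)) : Prop :=
  exists2 t, t \in H & exists k : 'I_n,
    val (t k) = 0 /\
    wmap (fun i : gensF n => (val i : 'I_n)) l = pos (filter (fun j : 'I_n => 0 < nat_of_ord j) (enum 'I_n)) /\
    wmap (fun i : gensF n => (val i : 'I_n)) r = pos ([seq t j | j <- filter (fun j : 'I_n => k < j) (enum 'I_n)]
                      ++ [seq t j | j <- filter (fun j : 'I_n => j < k) (enum 'I_n)]).

From HB Require Import structures.
From mathcomp Require Import all_boot all_order all_algebra all_fingroup.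
Import GRing.Theory.
Set Implicit Arguments. Unset Strict Implicit. Unset Printing Implicit Defensive.

(* Write z = a_1 a_2 ... a_n and A = a_2 ... a_n, so that z = a_1 A as words.
   1. Since every power c^m lies in H, z equals each of its cyclic rotations
      in G_n(H); hence z commutes with every generator and is central.
   2. The inclusion F -> G_n(H), a_i |-> a_i, respects the relations: the
      relation of F attached to t is the relation z = a_t(1) ... a_t(n) of
      G_n(H) rotated so that a_t(k) = a_1 comes first, then cancelled with a_1.
   3. The substitution a_1 |-> A^-1, a_i |-> a_i (i >= 2) maps relations of
      G_n(H) to consequences of those of F, retracts the inclusion, and kills z.
   4. The exponent sum of a_1 is invariant under the relations of G_n(H) and
      equals 1 on z.
   The isomorphism F x Z -> G_n(H) is (w, k) |-> w z^k: a homomorphism by 1,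
   well defined by 2, injective by 3 and 4, and surjective because every word
   g equals retr(g) z^e(g), with e the exponent sum of a_1. *)

Definition winv (X : Type) (w : word X) : word X := rev [seq (p.1, ~~ p.2) | p <- w].

Section WordOperations.
Variables X Y : Type.
Implicit Types a b w : word X.

Lemma winv_cat a b : winv (a ++ b) = winv b ++ winv a.
Proof. by rewrite /winv map_cat rev_cat. Qed.

Lemma winvK w : winv (winv w) = w.
Proof.
rewrite /winv map_rev revK -map_comp.
by elim: w => //= [[x b] w ->] /=; rewrite negbK.
Qed.

Lemma winv_cons (p : X * bool) w : winv (p :: w) = winv w ++ [:: (p.1, ~~ p.2)].
Proof. by rewrite -cat1s winv_cat. Qed.

Lemma pos_cat (s t : seq X) : pos (s ++ t) = pos s ++ pos t.
Proof. exact: map_cat. Qed.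

Lemma wmap_cat (f : X -> Y) a b : wmap f (a ++ b) = wmap f a ++ wmap f b.
Proof. exact: map_cat. Qed.

Lemma wmap_inv (f : X -> Y) a : wmap f (winv a) = winv (wmap f a).
Proof. by rewrite /wmap /winv map_rev -!map_comp. Qed.

Lemma wmap_pos (f : X -> Y) (s : seq X) : wmap f (pos s) = pos (map f s).
Proof. by rewrite /wmap /pos -!map_comp. Qed.

End WordOperations.

Section Presentation.
Variables (X : Type) (R : word X -> word X -> Prop).
Implicit Types (a u v w : word X) (b : bool).

Lemma peq_ctx (a b : word X) u v : peq R a b -> peq R (u ++ a ++ v) (u ++ b ++ v).
Proof.
move=> h; elim: h u v => {a b}.
- by move=> w u v; apply: peq_refl.
- by move=> w1 w2 _ IH u v; apply: peq_sym.
- by move=> w1 w2 w3 _ IH1 _ IH2 u v; apply: peq_trans (IH1 u v) (IH2 u v).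
- move=> u' v' x b u v.
  have -> : u ++ (u' ++ [:: (x, b), (x, ~~ b) & v']) ++ v
          = (u ++ u') ++ [:: (x, b), (x, ~~ b) & v' ++ v] by rewrite -!catA.
  by rewrite !catA -(catA _ v'); apply: peq_cancel.
- move=> u' v' l r h u v.
  have E m : u ++ (u' ++ m ++ v') ++ v = (u ++ u') ++ m ++ (v' ++ v) by rewrite -!catA.
  by rewrite !E; apply: peq_rel.
Qed.

Lemma peq_catl (a b : word X) u : peq R a b -> peq R (u ++ a) (u ++ b).
Proof. by move=> h; have := peq_ctx u [::] h; rewrite !cats0. Qed.

Lemma peq_catr (a b : word X) v : peq R a b -> peq R (a ++ v) (b ++ v).
Proof. exact: peq_ctx [::] v. Qed.

Lemma peq_cat (a a' b b' : word X) : peq R a a' -> peq R b b' -> peq R (a ++ b) (a' ++ b').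
Proof. by move=> h1 h2; apply: peq_trans (peq_catr _ h1) (peq_catl _ h2). Qed.

Lemma peq_rel0 l r : R l r -> peq R l r.
Proof. by move=> h; have := peq_rel [::] [::] h; rewrite /= !cats0. Qed.

Lemma peq_cancel1 x b w : peq R ((x, b) :: (x, ~~ b) :: w) w.
Proof. exact: (peq_cancel R [::]). Qed.

Lemma peq_invr w : peq R (w ++ winv w) [::].
Proof.
elim: w => [|p w IH] /=; first exact: peq_refl.
rewrite winv_cons catA.
apply: peq_trans (peq_catr _ (peq_catl [:: p] IH)) _.
by case: p => x b; apply: peq_cancel1.
Qed.

Lemma peq_invl w : peq R (winv w ++ w) [::].
Proof. by have := peq_invr (winv w); rewrite winvK. Qed.

Lemma peq_inv (a b : word X) : peq R a b -> peq R (winv a) (winv b).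
Proof.
move=> h.
apply: peq_trans (_ : peq R (winv a ++ (b ++ winv b)) _).
  by have := peq_catl (winv a) (peq_sym (peq_invr b)); rewrite cats0.
rewrite catA; apply: peq_trans (peq_catr _ (peq_catl _ (peq_sym h))) _.
exact: peq_catr _ (peq_invl a).
Qed.

Lemma peq_inv_sandwich A P Q : peq R A (Q ++ P) -> peq R (P ++ winv A ++ Q) [::].
Proof.
move=> h; apply: peq_trans (peq_catl _ (peq_catr _ (peq_inv h))) _.
rewrite winv_cat -!catA catA.
exact: peq_cat (peq_invr P) (peq_invl Q).
Qed.

Definition central a := forall w, peq R (w ++ a) (a ++ w).

Lemma central_inv a : central a -> central (winv a).
Proof.
move=> ca w.
apply: peq_trans (_ : peq R (winv a ++ (a ++ w) ++ winv a) _).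
  rewrite catA; apply: peq_catr; rewrite catA.
  by apply: (@peq_catr [::]); apply: peq_sym; apply: peq_invl.
apply: peq_trans (_ : peq R (winv a ++ (w ++ a) ++ winv a) _).
  by apply: peq_catl; apply: peq_catr; apply: peq_sym.
rewrite -!catA; apply: peq_catl.
by have := peq_catl w (peq_invr a); rewrite cats0.
Qed.

Lemma central_cat (a b : word X) : central a -> central b -> central (a ++ b).
Proof.
move=> ca cb w; rewrite catA.
by apply: peq_trans (peq_catr _ (ca w)) _; rewrite -!catA; apply: peq_catl.
Qed.

(* If a central word z is x F and is also equal to P x Q, then F = Q P:
   conjugating by P turns P x Q into x Q P, and then x cancels. *)
Lemma central_rotate z x F P Q :
  central z -> z = (x, true) :: F -> peq R z (P ++ (x, true) :: Q) ->
  peq R F (Q ++ P).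
Proof.
move=> cz ez h.
have xQP : peq R ((x, true) :: Q ++ P) z.
  apply: peq_trans (_ : peq R ((winv P ++ P) ++ ((x, true) :: Q) ++ P) _).
    exact: peq_catr _ (peq_sym (peq_invl P)).
  rewrite -catA (catA P).
  apply: peq_trans (peq_catl _ (peq_catr _ (peq_sym h))) _.
  apply: peq_trans (peq_catl _ (peq_sym (cz P))) _.
  by rewrite catA; apply: (peq_catr _ (peq_invl P)).
apply: peq_trans (peq_sym (peq_cancel1 x false F)) _.
rewrite /= -ez; apply: peq_trans (peq_catl [:: (x, false)] (peq_sym xQP)) _.
exact: peq_cancel1.
Qed.

Local Open Scope ring_scope.

Definition pw a (k : int) : word X :=
  match k with Posz m => flatten (nseq m a) | Negz m => flatten (nseq m.+1 (winv a)) end.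

Lemma flatten_nseqS a m : flatten (nseq m.+1 a) = flatten (nseq m a) ++ a.
Proof.
elim: m => [|m IH]; first by rewrite /= cats0.
by change (a ++ flatten (nseq m.+1 a) = flatten (nseq m.+1 a) ++ a); rewrite {1}IH catA.
Qed.

Lemma pw_addS a k : peq R (pw a (k + 1)) (pw a k ++ a).
Proof.
case: k => [m|[|m]].
- have -> : Posz m + 1 = Posz m.+1 by rewrite -addn1 PoszD.
  by rewrite /pw flatten_nseqS; apply: peq_refl.
- rewrite (_ : Negz 0 + 1 = 0); last by rewrite NegzE addNr.
  by rewrite /pw /= cats0; apply: peq_sym; apply: peq_invl.
- have -> : Negz m.+1 + 1 = Negz m by rewrite !NegzE -addn1 PoszD opprD addrNK.
  rewrite /pw (flatten_nseqS _ m.+1) -catA.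
  by have := peq_catl (flatten (nseq m.+1 (winv a))) (peq_sym (peq_invl a)); rewrite cats0.
Qed.

Lemma pw_subS a k : peq R (pw a (k - 1)) (pw a k ++ winv a).
Proof.
case: k => [[|m]|m].
- rewrite (_ : Posz 0 - 1 = Negz 0); last by rewrite NegzE add0r.
  by rewrite /pw /= cats0; apply: peq_refl.
- have -> : Posz m.+1 - 1 = Posz m by rewrite -addn1 PoszD addrK.
  rewrite /pw (flatten_nseqS _ m) -catA.
  by have := peq_catl (flatten (nseq m a)) (peq_sym (peq_invr a)); rewrite cats0.
- have -> : Negz m - 1 = Negz m.+1 by rewrite !NegzE -(addn1 m.+1) PoszD opprD.
  rewrite /pw (flatten_nseqS _ m.+1); exact: peq_refl.
Qed.

Lemma pw_add a k1 k2 : peq R (pw a (k1 + k2)) (pw a k1 ++ pw a k2).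
Proof.
case: k2 => m; elim: m => [|m IH].
- by rewrite addr0 /= cats0; apply: peq_refl.
- have -> : Posz m.+1 = Posz m + 1 by rewrite -addn1 PoszD.
  rewrite addrA.
  apply: peq_trans (pw_addS _ _) _; apply: peq_trans (peq_catr _ IH) _.
  by rewrite -catA; apply: peq_catl; apply: peq_sym; apply: pw_addS.
- rewrite (_ : Negz 0 = 0 - 1); last by rewrite NegzE add0r.
  by rewrite addrA addr0; apply: peq_trans (pw_subS _ _) _; rewrite /= cats0; apply: peq_refl.
- have -> : Negz m.+1 = Negz m - 1 by rewrite !NegzE -(addn1 m.+1) PoszD opprD.
  rewrite addrA; apply: peq_trans (pw_subS _ _) _; apply: peq_trans (peq_catr _ IH) _.
  by rewrite -catA; apply: peq_catl; apply: peq_sym; apply: pw_subS.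
Qed.

Lemma central_pw a k : central a -> central (pw a k).
Proof.
have cnseq (c : word X) m : central c -> central (flatten (nseq m c)).
  move=> cc; elim: m => [|m IH] /=; last exact: central_cat.
  by move=> w; rewrite cats0; apply: peq_refl.
move=> ca; case: k => m; rewrite /pw; [exact: cnseq | exact/cnseq/central_inv].
Qed.

Lemma pw_trivial a k : peq R a [::] -> peq R (pw a k) [::].
Proof.
have tnseq (c : word X) m : peq R c [::] -> peq R (flatten (nseq m c)) [::].
  by move=> tc; elim: m => [|m IH] /=; [apply: peq_refl | have := peq_cat tc IH].
move=> ta; case: k => m; rewrite /pw; [exact: tnseq | exact/tnseq/(peq_inv ta)].
Qed.

End Presentation.

Definition subst (X Y : Type) (g : X -> word Y) (w : word X) : word Y :=
  flatten [seq (if p.2 then g p.1 else winv (g p.1)) | p <- w].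

Section Substitution.
Variables (X Y : Type) (g : X -> word Y).

Lemma subst_cat a b : subst g (a ++ b) = subst g a ++ subst g b.
Proof. by rewrite /subst map_cat flatten_cat. Qed.

Lemma subst_inv w : subst g (winv w) = winv (subst g w).
Proof.
elim: w => [|[x b] w IH] //=.
rewrite winv_cons subst_cat IH /subst /= cats0 -/(subst g w) winv_cat.
by case: b; rewrite //= winvK.
Qed.

Lemma subst_pw a k : subst g (pw a k) = pw (subst g a) k.
Proof.
have snseq b m : subst g (flatten (nseq m b)) = flatten (nseq m (subst g b)).
  by elim: m => [|m IH] //=; rewrite subst_cat IH.
by case: k => m; rewrite /pw snseq // subst_inv.
Qed.

Lemma wmap_subst (f : X -> Y) w : wmap f w = subst (fun x => [:: (f x, true)]) w.
Proof. by elim: w => [|[x b] w IH] //=; rewrite IH; case: b. Qed.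

Lemma peq_subst (R : word X -> word X -> Prop) (S : word Y -> word Y -> Prop) :
  (forall l r, R l r -> peq S (subst g l) (subst g r)) ->
  forall a b, peq R a b -> peq S (subst g a) (subst g b).
Proof.
move=> hR a b h; elim: h => {a b}.
- by move=> w; apply: peq_refl.
- by move=> w1 w2 _; apply: peq_sym.
- by move=> w1 w2 w3 _ IH1 _; apply: peq_trans IH1.
- move=> u v x b; rewrite !subst_cat; apply: peq_catl.
  rewrite /subst /= -/(subst g v) catA; apply: (@peq_catr _ _ _ [::]).
  by case: b => /=; [apply: peq_invr | apply: peq_invl].
- by move=> u v l r h; rewrite !subst_cat; apply: peq_ctx; apply: hR.
Qed.

End Substitution.

Section ExponentSum.
Local Open Scope ring_scope.
Variables (X : Type) (P : X -> bool).

Definition es (w : word X) : int :=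
  foldr (fun p acc => (if P p.1 then (if p.2 then 1 else -1) else 0) + acc) 0 w.

Lemma es_cat a b : es (a ++ b) = es a + es b.
Proof. by elim: a => [|p a IH] /=; rewrite ?add0r // IH addrA. Qed.

Lemma es_inv a : es (winv a) = - es a.
Proof.
elim: a => [|[x b] a IH] /=; first by rewrite oppr0.
rewrite winv_cons es_cat IH /= addr0 opprD addrC; congr (_ + _).
by case: (P x); case: b; rewrite ?opprK ?oppr0.
Qed.

Lemma es_pw a k : es a = 1 -> es (pw a k) = k.
Proof.
have es_nseq (c : word X) m : es (flatten (nseq m c)) = es c *+ m.
  by elim: m => [|m IH] //=; rewrite es_cat IH mulrS.
by move=> ea; case: k => m; rewrite /pw es_nseq ?es_inv ea ?NegzE ?mulNrn natz.
Qed.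

Lemma es_avoid w : all (fun p => ~~ P p.1) w -> es w = 0.
Proof. by elim: w => [|[x b] w IH] //= /andP[/negbTE -> /IH ->]. Qed.

Lemma peq_es (R : word X -> word X -> Prop) :
  (forall l r, R l r -> es l = es r) -> forall a b, peq R a b -> es a = es b.
Proof.
move=> hR a b h; elim: h => {a b}.
- by [].
- by move=> w1 w2 _ ->.
- by move=> w1 w2 w3 _ -> _ ->.
- move=> u v x b; rewrite !es_cat /=; congr (_ + _).
  by case: (P x); case: b; rewrite /= addrA ?addrN ?addNr add0r.
- by move=> u v l r h; rewrite !es_cat (hR _ _ h).
Qed.

End ExponentSum.

Lemma iota_split n k : k < n ->
  iota 0 n = [seq j <- iota 0 n | j < k] ++ k :: [seq j <- iota 0 n | k < j].
Proof.
move=> kn.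
have -> : iota 0 n = iota 0 k ++ k :: iota k.+1 (n - k.+1).
  by rewrite -{1}(subnKC kn) iotaD -addn1 iotaD -catA.
rewrite !filter_cat /= ltnn /=.
rewrite (eq_in_filter (a1 := fun j => j < k) (a2 := predT)); last by move=> j; rewrite mem_iota.
rewrite (eq_in_filter (a1 := fun j => j < k) (a2 := pred0) (s := iota k.+1 _)); last first.
  by move=> j; rewrite mem_iota /= => /andP[h _]; rewrite ltnNge ltnW.
rewrite (eq_in_filter (a1 := fun j => k < j) (a2 := pred0) (s := iota 0 k)); last first.
  by move=> j; rewrite mem_iota /= add0n => h; rewrite ltnNge ltnW.
rewrite (eq_in_filter (a1 := fun j => k < j) (a2 := predT)); last by move=> j; rewrite mem_iota => /andP[].
by rewrite filter_predT filter_pred0 filter_pred0 filter_predT cats0.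
Qed.

Lemma enum_split n (k : 'I_n) :
  enum 'I_n = [seq j : 'I_n <- enum 'I_n | j < k] ++ k :: [seq j : 'I_n <- enum 'I_n | k < j].
Proof.
apply: (inj_map val_inj).
have val_filter (q : pred nat) :
    map val [seq j : 'I_n <- enum 'I_n | q (nat_of_ord j)] = [seq j <- iota 0 n | q j].
  by rewrite -val_enum_ord filter_map.
rewrite map_cat /= (val_filter (fun j => j < k)) (val_filter (fun j => k < j)) val_enum_ord.
exact: iota_split.
Qed.

Lemma map_split n (s : {perm 'I_n}) (k : 'I_n) :
  map s (enum 'I_n) =
  map s [seq j : 'I_n <- enum 'I_n | j < k] ++ s k :: map s [seq j : 'I_n <- enum 'I_n | k < j].
Proof. by rewrite {1}(enum_split k) map_cat. Qed.

Lemma map_cycle1 n : map (cycle_perm n) (enum 'I_n) = rot 1 (enum 'I_n).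
Proof.
apply: (inj_map val_inj).
have -> : map val (map (cycle_perm n) (enum 'I_n)) = map (fun i => i.+1 %% n) (iota 0 n).
  by rewrite -val_enum_ord -!map_comp; apply: eq_map => i /=; rewrite permE.
rewrite map_rot val_enum_ord.
case: n => [|n] //.
rewrite [in LHS](_ : iota 0 n.+1 = rcons (iota 0 n) n); last by rewrite -cats1 -addn1 iotaD.
rewrite map_rcons (_ : iota 0 n.+1 = 0 :: iota 1 n) // rot1_cons modnn; congr rcons.
rewrite -[iota 1 n]/(iota (1 + 0) n) iotaDl.
by apply/eq_in_map => i; rewrite mem_iota /= => hi; rewrite modn_small // add1n.
Qed.

Lemma map_cycle_pow n m : m <= n ->
  map (cycle_perm n ^+ m)%g (enum 'I_n) = rot m (enum 'I_n).
Proof.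
elim: m => [|m IH] hm.
  by rewrite expg0 rot0 -[RHS]map_id; apply: eq_map => i; apply: perm1.
rewrite expgSr (eq_map (permM _ _)) map_comp IH ?(ltnW hm) // map_rot map_cycle1.
by rewrite -rotD addn1 // size_enum_ord.
Qed.

Definition incl n (i : gensF n) : 'I_n := val i.

Definition tail_gens n : seq 'I_n := [seq j : 'I_n <- enum 'I_n | 0 < nat_of_ord j].
Definition Aword n : word (gensF n) :=
  pos (pmap (fun x => (insub x : option (gensF n))) (enum 'I_n)).

Definition avoids_a1 n (w : word 'I_n) : bool := all (fun p => 0 < nat_of_ord p.1) w.

Definition retr_gen n (x : 'I_n) : word (gensF n) :=
  if (insub x : option (gensF n)) is Some y then [:: (y, true)] else winv (Aword n).
Definition retr n : word 'I_n -> word (gensF n) := subst (@retr_gen n).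

Definition is_a1 n (x : 'I_n) : bool := nat_of_ord x == 0.

Definition phi n (p : word (gensF n) * int) : word 'I_n :=
  wmap (@incl n) p.1 ++ pw (zword n) p.2.

Lemma wmap_Aword n : wmap (@incl n) (Aword n) = pos (tail_gens n).
Proof.
rewrite /Aword wmap_pos /incl /tail_gens; congr pos.
rewrite (pmap_filter (@insubK _ _ (gensF n))); apply: eq_filter => x.
exact: isSome_insub.
Qed.

Lemma retr_cat n (a b : word 'I_n) : retr (a ++ b) = retr a ++ retr b.
Proof. exact: subst_cat. Qed.

Lemma retr_cons n (p : 'I_n * bool) (w : word 'I_n) :
  retr (p :: w) = (if p.2 then retr_gen p.1 else winv (retr_gen p.1)) ++ retr w.
Proof. by []. Qed.

Lemma retr_incl n w : retr (wmap (@incl n) w) = w.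
Proof.
elim: w => [|[i b] w IH] //.
by rewrite [wmap _ _]/= retr_cons IH /retr_gen /incl valK; case: b.
Qed.

Lemma incl_retr n (w : word 'I_n) : avoids_a1 w -> wmap (@incl n) (retr w) = w.
Proof.
elim: w => [|[x b] w IH] //= /andP[hx /IH {}IH].
by rewrite retr_cons wmap_cat IH /retr_gen (insubT (fun i : 'I_n => 0 < nat_of_ord i) hx); case: b.
Qed.

Lemma avoids_a1_incl n (w : word (gensF n)) : avoids_a1 (wmap (@incl n) w).
Proof. by rewrite /avoids_a1 /wmap all_map; apply/allP => [[i b]] _ /=; apply: (valP i). Qed.

Lemma retr_Aword n : retr (pos (tail_gens n)) = Aword n.
Proof. by rewrite -wmap_Aword retr_incl. Qed.

Lemma avoids_a1_perm n (s : {perm 'I_n}) (k : 'I_n) (p : pred 'I_n) :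
  nat_of_ord (s k) = 0 -> (forall j, p j -> j != k) ->
  avoids_a1 (pos (map s [seq j : 'I_n <- enum 'I_n | p j])).
Proof.
move=> sk0 hp; rewrite /avoids_a1 /pos all_map.
apply/allP => x /mapP[j]; rewrite mem_filter => /andP[pj _] -> /=.
rewrite lt0n; apply: contra _ (hp j pj) => /eqP sj0.
by apply/eqP/(@perm_inj _ s)/val_inj; rewrite /= sj0 sk0.
Qed.

Lemma avoids_a1_side n (s : {perm 'I_n}) (k : 'I_n) : nat_of_ord (s k) = 0 ->
  avoids_a1 (pos (map s [seq j : 'I_n <- enum 'I_n | j < k])) /\
  avoids_a1 (pos (map s [seq j : 'I_n <- enum 'I_n | k < j])).
Proof.
by move=> sk0; split; apply: avoids_a1_perm sk0 _ => j hj; apply: contraTneq hj => ->; rewrite ltnn.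
Qed.

Section TheGroup.
Variables (n : nat) (H : {set {perm 'I_n}}).
Hypothesis n_gt0 : 0 < n.
Hypothesis cycle_powH : forall m, (cycle_perm n ^+ m)%g \in H.

Let a1 : 'I_n := Ordinal n_gt0.

Lemma zword_split : zword n = (a1, true) :: pos (tail_gens n).
Proof.
rewrite /zword {1}(enum_split a1).
by rewrite (eq_filter (a2 := pred0)) // filter_pred0.
Qed.

Lemma retr_gen_a1 : retr_gen a1 = winv (Aword n).
Proof. by rewrite /retr_gen insubN. Qed.

(* Step 1: z is central.  Each rotation of z is a relator since c^m is in H;
   the rotations starting at a_x and just after a_x give x z = z x. *)
Lemma zword_rot m : m <= n -> peq (relG H) (zword n) (pos (rot m (enum 'I_n))).
Proof.
move=> hm; apply: peq_rel0; exists (cycle_perm n ^+ m)%g; first exact: cycle_powH.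
by split => //; rewrite -(map_cycle_pow hm).
Qed.

Lemma zword_letter (x : 'I_n) b :
  peq (relG H) ([:: (x, b)] ++ zword n) (zword n ++ [:: (x, b)]).
Proof.
pose m := nat_of_ord x.
have hm : m < size (enum 'I_n) by rewrite size_enum_ord; apply: ltn_ord.
pose Y := pos (drop m.+1 (enum 'I_n) ++ take m (enum 'I_n)).
have rot_m : pos (rot m (enum 'I_n)) = (x, true) :: Y.
  by rewrite /rot (drop_nth x hm) nth_ord_enum.
have rot_mS : pos (rot m.+1 (enum 'I_n)) = Y ++ [:: (x, true)].
  by rewrite /rot (take_nth x hm) nth_ord_enum -cats1 catA /Y !pos_cat.
have zx : peq (relG H) ([:: (x, true)] ++ zword n) (zword n ++ [:: (x, true)]).
  apply: peq_trans (peq_catl _ (zword_rot (ltn_ord x))) _.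
  rewrite rot_mS catA [[:: (x, true)] ++ Y]/= -rot_m.
  by apply: peq_catr; apply: peq_sym; apply: zword_rot; apply: ltnW (ltn_ord x).
case: b; first exact: zx.
apply: peq_trans (_ : peq _ ([:: (x, false)] ++ (zword n ++ [:: (x, true)]) ++ [:: (x, false)]) _).
  rewrite -catA; apply: peq_catl; apply: peq_sym.
  by have := peq_catl (zword n) (peq_cancel1 (relG H) x true [::]); rewrite cats0.
apply: peq_trans (peq_catl _ (peq_catr _ (peq_sym zx))) _.
by rewrite !catA; apply: peq_catr; apply: (peq_cancel1 _ x false).
Qed.

Lemma zword_central : central (relG H) (zword n).
Proof.
elim=> [|[x b] w IH] /=; first by rewrite cats0; apply: peq_refl.
apply: peq_trans (peq_catl [:: (x, b)] IH) _.
by have := peq_catr w (zword_letter x b); rewrite -!catA.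
Qed.

Lemma relF_incl l r : relF H l r -> peq (relG H) (wmap (@incl n) l) (wmap (@incl n) r).
Proof.
case=> t tH [k [tk0 [-> ->]]]; rewrite pos_cat.
apply: (central_rotate zword_central zword_split).
have zt : peq (relG H) (zword n) (pos [seq t i | i <- enum 'I_n]).
  by apply: peq_rel0; exists t.
by move: zt; rewrite (map_split t k) pos_cat -/a1 (_ : t k = a1) //; apply: val_inj.
Qed.

Lemma peq_incl w1 w2 :
  peq (relF H) w1 w2 -> peq (relG H) (wmap (@incl n) w1) (wmap (@incl n) w2).
Proof.
move=> h; rewrite !wmap_subst; apply: (peq_subst _ h) => l r hlr.
by rewrite -!wmap_subst; apply: relF_incl.
Qed.

Lemma relG_retr l r : relG H l r -> peq (relF H) (retr l) (retr r).
Proof.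
case=> s sH [-> ->].
pose k := (s^-1)%g a1.
have sk : s k = a1 by rewrite permKV.
have sk0 : nat_of_ord (s k) = 0 by rewrite sk.
have [hP hQ] := avoids_a1_side sk0.
have relQP : relF H (Aword n) (retr (pos [seq s j | j : 'I_n <- enum 'I_n & k < j]) ++
                               retr (pos [seq s j | j : 'I_n <- enum 'I_n & j < k])).
  exists s => //; exists k; split => //; split; first exact: wmap_Aword.
  by rewrite wmap_cat !incl_retr // pos_cat.
rewrite -/(zword n) zword_split (map_split s k) sk pos_cat retr_cat !retr_cons /=.
rewrite retr_gen_a1 retr_Aword; apply: peq_trans (peq_invl _ _) _; apply: peq_sym.
exact: peq_inv_sandwich (peq_rel0 relQP).
Qed.

Lemma retr_zword : peq (relF H) (retr (zword n)) [::].
Proof.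
by rewrite zword_split retr_cons /= retr_gen_a1 retr_Aword; apply: peq_invl.
Qed.

Lemma es_avoids_a1 (w : word 'I_n) : avoids_a1 w -> es (@is_a1 n) w = 0.
Proof. by move=> hw; apply: es_avoid; apply: sub_all hw => p; rewrite /is_a1 lt0n. Qed.

Lemma es_zword : es (@is_a1 n) (zword n) = 1%R.
Proof.
rewrite zword_split /= es_avoids_a1 ?addr0 //.
by rewrite /avoids_a1 /pos all_map /tail_gens all_filter; apply/allP => x _; apply/implyP.
Qed.

Lemma relG_es l r : relG H l r -> es (@is_a1 n) l = es (@is_a1 n) r.
Proof.
case=> s sH [-> ->].
pose k := (s^-1)%g a1.
have sk : s k = a1 by rewrite permKV.
have sk0 : nat_of_ord (s k) = 0 by rewrite sk.
have [hP hQ] := avoids_a1_side sk0.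
rewrite -/(zword n) es_zword (map_split s k) pos_cat es_cat /= !es_avoids_a1 //.
by rewrite sk /is_a1 /= add0r addr0.
Qed.

(* phi is a homomorphism because z is central, and injective because both
   coordinates are recovered: w by the retraction, k by the exponent sum. *)
Lemma phi_morph w1 w2 k1 k2 :
  peq (relG H) (phi (w1 ++ w2, (k1 + k2)%R)) (phi (w1, k1) ++ phi (w2, k2)).
Proof.
rewrite /phi /= wmap_cat -!catA; apply: peq_catl.
apply: peq_trans (peq_catl _ (pw_add _ _ _ _)) _.
by rewrite !catA; apply: peq_catr; apply: (central_pw k1 zword_central).
Qed.

Lemma retr_phi w k : peq (relF H) (retr (phi (w, k))) w.
Proof.
rewrite /phi /retr subst_cat -/(retr _) retr_incl subst_pw -/(retr _).
by have := peq_catl w (pw_trivial k retr_zword); rewrite cats0.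
Qed.

Lemma es_phi w k : es (@is_a1 n) (phi (w, k)) = k.
Proof. by rewrite es_cat es_avoids_a1 ?avoids_a1_incl // es_pw ?es_zword ?add0r. Qed.

Lemma phi_inj w1 w2 k1 k2 :
  peq (relG H) (phi (w1, k1)) (phi (w2, k2)) -> peq (relF H) w1 w2 /\ k1 = k2.
Proof.
move=> h; split; last by rewrite -(es_phi w1 k1) -(es_phi w2 k2); apply: peq_es relG_es _ _ h.
apply: peq_trans (peq_sym (retr_phi w1 k1)) _.
by apply: peq_trans (retr_phi w2 k2); apply: peq_subst relG_retr _ _ h.
Qed.

(* Every word g equals retr(g) z^e(g): for a single letter this is immediate
   (for a_1 it reads A^-1 z = a_1), and phi is multiplicative. *)
Lemma letter_normal_form (x : 'I_n) b :
  peq (relG H) (phi (if b then retr_gen x else winv (retr_gen x),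
                     if is_a1 x then (if b then 1 else -1)%R else 0%R)) [:: (x, b)].
Proof.
rewrite /phi /retr_gen /is_a1; case: insubP => [u hx ux | hx] /=.
  by rewrite (negbTE (lt0n_neq0 hx)) cats0; case: b; rewrite /= /incl ux; apply: peq_refl.
have x_a1 : x = a1 by apply: val_inj; move: hx; rewrite lt0n negbK => /eqP.
rewrite x_a1 eqxx; case: b => /=; rewrite cats0 ?winvK ?wmap_inv wmap_Aword.
  apply: peq_trans (zword_central _) _; rewrite zword_split.
  by have := peq_catl [:: (a1, true)] (peq_invr (relG H) (pos (tail_gens n))); rewrite cats0.
by rewrite zword_split winv_cons catA; apply: (@peq_catr _ _ _ [::]); apply: peq_invr.
Qed.

Lemma normal_form g : peq (relG H) (phi (retr g, es (@is_a1 n) g)) g.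
Proof.
elim: g => [|[x b] g IH]; first exact: peq_refl.
rewrite /retr /= -/(retr _) /= -[_ :: g]/([:: (x, b)] ++ g).
apply: peq_trans (phi_morph _ _ _ _) _.
exact: peq_trans (peq_catr _ (letter_normal_form x b)) (peq_catl _ IH).
Qed.

End TheGroup.

(* G_n(H) is isomorphic to F x Z, with the Z factor generated by the image of z.
   phi is a map on representatives (pairs (word of F, integer)) that is well
   defined, a homomorphism, injective and surjective modulo the relations,
   and sends the generator (1, 1) of the Z factor to z. *)
Theorem mainTheorem10 (n : nat) (H : {group {perm 'I_n}}) :
  2 < n -> (<[cycle_perm n]> \subset H)%g ->
  exists phi : word (gensF n) * int -> word 'I_n,
    [/\ forall w1 w2 k, peq (relF H) w1 w2 -> peq (relG H) (phi (w1, k)) (phi (w2, k)),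
        forall w1 w2 (k1 k2 : int),
          peq (relG H) (phi (w1 ++ w2, (k1 + k2)%R)) (phi (w1, k1) ++ phi (w2, k2)),
        forall w1 w2 k1 k2, peq (relG H) (phi (w1, k1)) (phi (w2, k2)) ->
          peq (relF H) w1 w2 /\ k1 = k2,
        forall g, exists p, peq (relG H) (phi p) g
      & peq (relG H) (phi ([::], 1%R)) (zword n)].
Proof.
move=> n_gt2 cycH.
have n_gt0 : 0 < n by apply: leq_trans n_gt2.
have cycle_powH m : (cycle_perm n ^+ m)%g \in H by apply: (subsetP cycH); apply: mem_cycle.
exists (@phi n); split.
- by move=> w1 w2 k h; apply: peq_catr; apply: peq_incl.
- exact: phi_morph cycle_powH.
- exact: phi_inj n_gt0.
- by move=> g; exists (retr g, es (@is_a1 n) g); apply: normal_form.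
- by rewrite /phi /= cats0; apply: peq_refl.
Qed.
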